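(* Let $X$ be an infinite compact metrizable space, $h\colon X\to X$ a minimal homeomorphism, and suppose $(X,h)$ has the topological small boundary property. Let $\varepsilon>0$. Then for any closed set $F\subset X$ and any open set $U\subset X$ with $F\subset U$, there exist a closed set $K\subset X$ and an open set $V\subset X$ such that (1) $F\subset\mathrm{int}(K)\subset K\subset V\subset\overline{V}\subset U$; (2) $\partial K$ and $\partial V$ are topologically $h$-small; (3) $\mu(V\setminus K)<\varepsilon$ for all $\mu\in M_h(X)$.
   Context: $M_h(X)$ denotes the set of $h$-invariant Borel probability measures on $X$; $\partial A$ is the boundary of $A$. A closed set $F\subset X$ is topologically $h$-small if there is $m\in\mathbb{Z}_{+}$ such that whenever $d(0),\dots,d(m)$ are $m+1$ distinct integers, $h^{d(0)}(F)\cap\cdots\cap h^{d(m)}(F)=\varnothing$. $(X,h)$ has the topological small boundary property if whenever $F,K\subset X$ are disjoint compact sets, there exist open sets $U,V\subset X$ with $F\subset U$, $K\subset V$, $\overline{U}\cap\overline{V}=\varnothing$ and $\partial U$ topologically $h$-small. *)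

From HB Require Import structures.
From mathcomp Require Import all_boot all_order all_algebra.
From mathcomp Require Import all_classical all_reals all_analysis.
Set Implicit Arguments. Unset Strict Implicit. Unset Printing Implicit Defensive.
Import Order.TTheory GRing.Theory Num.Theory.
Local Open Scope classical_set_scope.
Local Open Scope ring_scope.

Definition homeomorphism (X : topologicalType) (h : X -> X) : Prop :=
  continuous h /\ exists g : X -> X, [/\ cancel h g, cancel g h & continuous g].

Definition minimal_map (X : topologicalType) (h : X -> X) : Prop :=
  forall A : set X, closed A -> h @` A = A -> A = set0 \/ A = setT.

Definition boundary (X : topologicalType) (A : set X) : set X :=
  closure A `\` A°.

(* image of A under h^d for an integer d (h a bijection):
   h^n(A) for d = n >= 0, and h^{-(n+1)}(A) = preimage of A under h^(n+1)
   for d = -(n+1). *)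
Definition zimage (X : Type) (h : X -> X) (d : int) (A : set X) : set X :=
  match d with
  | Posz n => iter n h @` A
  | Negz n => iter n.+1 h @^-1` A
  end.

Definition top_small (X : topologicalType) (h : X -> X) (F : set X) : Prop :=
  closed F /\
  exists m : nat, forall d : 'I_m.+1 -> int, injective d ->
    \bigcap_(i in [set: 'I_m.+1]) zimage h (d i) F = set0.

Definition top_small_boundary_property (X : topologicalType) (h : X -> X) : Prop :=
  forall F K : set X, compact F -> compact K -> F `&` K = set0 ->
    exists U V : set X, [/\ open U /\ open V, F `<=` U, K `<=` V,
      closure U `&` closure V = set0 & top_small h (boundary U)].

Definition borel_type (X : ptopologicalType) := g_sigma_algebraType (@open X).

Definition invariant_measure (R : realType) (X : ptopologicalType) (h : X -> X)
  (mu : probability (borel_type X) R) : Prop :=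
  forall A : set (borel_type X), measurable A -> mu (h @^-1` A) = mu A.

From HB Require Import structures.
From mathcomp Require Import all_boot all_order all_algebra.
From mathcomp Require Import all_classical all_reals all_analysis.
From mathcomp Require Import finmap measurable_realfun.
Set Implicit Arguments. Unset Strict Implicit. Unset Printing Implicit Defensive.
Import Order.TTheory GRing.Theory Num.Theory.
Local Open Scope classical_set_scope.
Local Open Scope ring_scope.

(* Let W be a neighbourhood of F with closure W inside U and topologically
   small boundary. If an orbit segment x, h x, ..., h^N x meets a closed set B
   at most m times with m independent of N, the same holds on some open
   neighbourhood Q of B (compactness), and integrating the visit count against
   an invariant measure gives N mu(Q) <= m, so mu(Q) < eps for N large. Taking
   B the boundary of W and Q disjoint from F, the small boundary property
   squeezes K and V between closure W minus Q and W union Q, so V minus K lies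
   in Q. *)

Lemma continuous_iter (X : topologicalType) (h : X -> X) n :
  continuous h -> continuous (iter n h).
Proof.
move=> hc; elim: n => [|n IH] x /=; first exact: cvg_id.
exact: (continuous_comp (IH x) (hc _)).
Qed.

Lemma open_preimage_iter (X : topologicalType) (h : X -> X) n (A : set X) :
  continuous h -> open A -> open (iter n h @^-1` A).
Proof. by move=> hc; apply: open_comp => x _; apply: continuous_iter. Qed.

Lemma open_bigcap_fset (X : topologicalType) (I : choiceType) (D : {fset I})
    (o : I -> set X) :
  (forall i, i \in D -> open (o i)) -> open (\bigcap_(i in [set` D]) o i).
Proof.
move=> oD; rewrite openE => y Dy; apply: filter_bigI => i iD.
by apply: open_nbhs_nbhs; split; [exact: oD | exact: Dy].
Qed.

Lemma closed_boundary (X : topologicalType) (A : set X) : closed (boundary A).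
Proof.
rewrite /boundary setDE; apply: closedI; first exact: closed_closure.
exact/open_closedC/open_interior.
Qed.

Lemma closure_subset_boundary (X : topologicalType) (A : set X) :
  closure A `<=` A `|` boundary A.
Proof.
move=> x clx; have [Ax|nAx] := pselect (A x); [by left | right].
by split => // /interior_subset.
Qed.

Lemma boundary_closure_subset (X : topologicalType) (A : set X) :
  boundary (closure A) `<=` boundary A.
Proof.
move=> x [clx nix]; split; first exact: closed_closure clx.
by apply: contra_not nix; apply: interiorS; exact: subset_closure.
Qed.

Lemma zimage_subset (X : Type) (h : X -> X) d (A B : set X) :
  A `<=` B -> zimage h d A `<=` zimage h d B.
Proof. by case: d => n AB /=; [exact: image_subset | move=> y /AB]. Qed.

Lemma top_small_subset (X : topologicalType) (h : X -> X) (A B : set X) :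
  closed A -> A `<=` B -> top_small h B -> top_small h A.
Proof.
move=> cA AB [_ [m smallB]]; split => //; exists m => d dinj.
rewrite -subset0 => x Ax; move: (smallB d dinj); rewrite -subset0; apply => i _.
exact: zimage_subset AB _ (Ax i I).
Qed.

Definition visits (X : Type) (h : X -> X) (N : nat) (A : set X) (x : X) : nat :=
  #|[pred d : 'I_N | `[< A (iter d.+1 h x) >] ]|.

Lemma le_visits (X : Type) (h : X -> X) N (A B : set X) x y :
  (forall d : 'I_N, A (iter d.+1 h x) -> B (iter d.+1 h y)) ->
  (visits h N A x <= visits h N B y)%N.
Proof.
move=> AB; apply: subset_leq_card; apply/fintype.subsetP => d; rewrite !inE.
by move=> /asboolP Ad; apply/asboolP; exact: AB.
Qed.

Lemma top_small_visits_bounded (X : topologicalType) (h : X -> X) (B : set X) :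
  top_small h B -> exists m, forall N x, (visits h N B x <= m)%N.
Proof.
move=> [_ [m smallB]]; exists m => N x; rewrite leqNgt; apply/negP => ltmN.
pose S := [pred d : 'I_N | `[< B (iter d.+1 h x) >] ].
have leS : (m.+1 <= #|S|)%N by [].
pose d i := Negz (enum_val (widen_ord leS i)).
have dinj : injective d.
  by move=> i j [] /val_inj /enum_val_inj /(congr1 val) ij; exact: val_inj.
move: (smallB d dinj); rewrite -subset0 => /(_ x); apply => i _.
by have := enum_valP (widen_ord leS i); rewrite inE => /asboolP.
Qed.

Lemma open_visits_le (X : topologicalType) (h : X -> X) N m (C : set X) :
  continuous h -> closed C -> open [set x | (visits h N C x <= m)%N].
Proof.
move=> hc cC; rewrite openE => x /= visx.
have : \forall z \near x,
    forall d : 'I_N, ~ C (iter d.+1 h x) -> ~ C (iter d.+1 h z).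
  apply: filter_forall => d; have [Cx|nCx] := pselect (C (iter d.+1 h x)).
    by apply: nearW.
  have oC : open (iter d.+1 h @^-1` ~` C).
    by apply: open_preimage_iter => //; rewrite openC.
  by apply: filterS (open_nbhs_nbhs (conj oC nCx)) => z nCz _.
apply: filterS => z nearz /=; apply: leq_trans visx.
by apply: le_visits => d Cz; apply: contrapT => /nearz.
Qed.

(* Each x has a neighbourhood O of B whose closure misses the points
   h^(d+1) x outside B; the visit counts of closures being upper
   semicontinuous, finitely many such O suffice, and we intersect them. *)
Lemma visits_nbhd (X : ptopologicalType) (h : X -> X) (B : set X) N m :
  compact [set: X] -> continuous h ->
  (forall S, finite_set S -> B `&` S = set0 ->
     exists O, [/\ open O, B `<=` O & closure O `&` S = set0]) ->
  (forall x, (visits h N B x <= m)%N) ->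
  exists O, [/\ open O, B `<=` O & forall x, (visits h N O x <= m)%N].
Proof.
move=> cX hc sepB visB.
pose D := [set O : set X | open O /\ B `<=` O].
pose f O := [set x | (visits h N (closure O) x <= m)%N].
have cov : [set: X] `<=` cover D f.
  move=> x _.
  pose S := [set iter d.+1 h x | d in [set d : 'I_N | ~ B (iter d.+1 h x)]].
  have fS : finite_set S by apply: finite_image; exact: finite_finset.
  have BS : B `&` S = set0.
    by rewrite -subset0 => y [By [d nBd dy]]; apply: nBd; rewrite dy.
  have [W [oW BW clWS]] := sepB S fS BS.
  exists W => //; apply: leq_trans (visB x); apply: le_visits => d clWd.
  apply: contrapT => nBd; move: clWS; rewrite -subset0; apply.
  by split; [exact: clWd | exists d].
have [Dp sDp covp] : finite_subset_cover D f [set: X].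
  move: cX; rewrite compact_cover; apply => // O _.
  by apply: open_visits_le => //; exact: closed_closure.
have DpD i : i \in Dp -> D i by move=> /sDp; rewrite in_setE.
exists (\bigcap_(i in [set` Dp]) i); split.
- by apply: open_bigcap_fset => i /DpD [].
- by move=> y By i /DpD [_]; apply.
- move=> x; have [i Dpi fx] := covp x I.
  apply: leq_trans fx; apply: le_visits => d Dd.
  by apply: subset_closure; exact: Dd.
Qed.

Lemma borel_measurable_open (X : ptopologicalType) (A : set X) :
  open A -> measurable (A : set (borel_type X)).
Proof. by move=> oA; apply: sub_sigma_algebra. Qed.

Lemma invariant_measure_iter (R : realType) (X : ptopologicalType) (h : X -> X)
    (mu : probability (borel_type X) R) n (A : set X) :
  continuous h -> invariant_measure h mu -> open A ->
  mu (iter n h @^-1` A) = mu A.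
Proof.
move=> hc hinv; elim: n A => [//|n IH] A oA.
rewrite [_ @^-1` A](_ : _ = iter n h @^-1` (h @^-1` A)) //.
rewrite IH ?hinv //; first exact: borel_measurable_open.
exact: (@open_preimage_iter _ h 1).
Qed.

Lemma sum_indic_visits (R : realType) (X : Type) (h : X -> X) N (O : set X) x :
  \sum_(d < N) \1_(iter d.+1 h @^-1` O) x = (visits h N O x)%:R :> R.
Proof.
rewrite /visits -sum1_card natr_sum [RHS]big_mkcond /=.
apply: eq_bigr => d _; rewrite indicE inE /=.
by have [Od|nOd] := pselect (O (iter d.+1 h x));
  [rewrite mem_set // asboolT | rewrite memNset // asboolF].
Qed.

(* Integrate the visit count: by invariance each of the N visit indicators has
   integral mu O. *)
Lemma invariant_measure_visits_le (R : realType) (X : ptopologicalType)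
    (h : X -> X) (mu : probability (borel_type X) R) N m (O : set X) :
  continuous h -> invariant_measure h mu -> open O ->
  (forall x, (visits h N O x <= m)%N) ->
  (N%:R%:E * mu O <= m%:R%:E)%E.
Proof.
move=> hc hinv oO visO.
have mO (d : 'I_N) : measurable (iter d.+1 h @^-1` O : set (borel_type X)).
  by apply: borel_measurable_open; apply: open_preimage_iter.
have -> : (N%:R%:E * mu O =
    \sum_(d < N) \int[mu]_x (\1_(iter d.+1 h @^-1` O) x)%:E)%E.
  rewrite (eq_bigr (fun _ => mu O)) => [|d _].
    by rewrite sumr_const card_ord mule_natl.
  by rewrite integral_indic ?setIT //; exact: invariant_measure_iter.
rewrite -ge0_integral_sum //; last first.
  by move=> d; apply/measurable_EFinP; exact: measurable_indic.
apply: (@le_trans _ _ (\int[mu]_x (cst m%:R%:E) x)%E).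
  apply: ge0_le_integral => //.
  - by move=> x _; apply: sume_ge0 => d _; rewrite lee_fin.
  - apply: emeasurable_sum => d.
    by apply/measurable_EFinP; exact: measurable_indic.
  - by move=> x _; rewrite sumEFin lee_fin sum_indic_visits ler_nat.
by rewrite integral_cst //= probability_setT mule1.
Qed.

Section SmallBoundaryProperty.
Variables (X : ptopologicalType) (h : X -> X).
Hypotheses (cX : compact [set: X]) (tsbp : top_small_boundary_property h).

Lemma tsbp_separate (A C : set X) : compact A -> compact C -> A `&` C = set0 ->
  exists W, [/\ open W, A `<=` W, closure W `&` C = set0 &
    top_small h (boundary W)].
Proof.
move=> cA cC AC; have [W [V [[oW oV] AW CV clWV smallW]]] := tsbp cA cC AC.
exists W; split => //; rewrite -subset0 => x [clWx Cx].
by move: clWV; rewrite -subset0; apply; split => //; apply/subset_closure/CV.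
Qed.

Lemma tsbp_shrink (A O : set X) : closed A -> open O -> A `<=` O ->
  exists W, [/\ open W, A `<=` W, closure W `<=` O & top_small h (boundary W)].
Proof.
move=> cA oO AO; have cpt (B : set X) : closed B -> compact B.
  by move=> cB; exact: subclosed_compact cB cX (@subsetT _ B).
have AOc : A `&` ~` O = set0 by rewrite -subset0 => x [/AO].
have [W [oW AW clWO smallW]] :=
  tsbp_separate (cpt _ cA) (cpt _ (open_closedC oO)) AOc.
exists W; split => // x clWx; apply: contrapT => nOx.
by move: clWO; rewrite -subset0 => /(_ x); apply.
Qed.

(* N mu(Q) <= m with m independent of N, so take N > m / eps. *)
Lemma top_small_nbhd_measure_lt (R : realType) (eps : R) (B O : set X) :
  continuous h -> 0 < eps -> top_small h B -> open O -> B `<=` O ->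
  exists Q, [/\ open Q, B `<=` Q, Q `<=` O &
    forall mu : probability (borel_type X) R, invariant_measure h mu ->
      (mu Q < eps%:E)%E].
Proof.
move=> hc eps0 smallB oO BO.
have [m visB] := top_small_visits_bounded smallB.
pose N := (Num.Def.truncn (m%:R / eps)).+1.
have mN : m%:R < N%:R * eps by rewrite -ltr_pdivrMr // truncnS_gt.
have sepB S : finite_set S -> B `&` S = set0 ->
    exists W, [/\ open W, B `<=` W & closure W `&` S = set0].
  move=> fS BS; have cB := subclosed_compact smallB.1 cX (@subsetT _ B).
  by have [W [? ? ? _]] := tsbp_separate cB (finite_compact fS) BS; exists W.
have [Q [oQ BQ visQ]] := visits_nbhd cX hc sepB (visB N).
exists (Q `&` O); split; [exact: openI | by move=> x Bx; split; auto | |].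
  by move=> x [].
move=> mu hinv; rewrite ltNge; apply/negP => epsQ.
have : ((N%:R * eps)%:E <= m%:R%:E)%E.
  have visQO x : (visits h N (Q `&` O) x <= m)%N.
    by apply: leq_trans (visQ x); apply: le_visits => d [].
  apply: le_trans (invariant_measure_visits_le hc hinv (openI oQ oO) visQO).
  by rewrite EFinM lee_wpmul2l // lee_fin.
by rewrite lee_fin leNgt mN.
Qed.

Lemma tsbp_squeeze (W Q U : set X) :
  open W -> open Q -> open U -> closure W `<=` U -> boundary W `<=` Q ->
  exists K V, [/\ closed K /\ open V, closure W `\` Q `<=` K°,
    K `<=` V /\ closure V `<=` U, V `\` K `<=` Q &
    top_small h (boundary K) /\ top_small h (boundary V)].
Proof.
move=> oW oQ oU clWU bWQ.
have clWWQ : closure W `<=` U `&` (W `|` Q).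
  move=> x clWx; split; first exact: clWU.
  by case: (closure_subset_boundary clWx) => [Wx|/bWQ]; [left | right].
have [V [oV clWV clVWQ smallV]] :=
  tsbp_shrink (@closed_closure _ W) (openI oU (openU oW oQ)) clWWQ.
have clWQW : closure W `\` Q `<=` W.
  by move=> x [/closure_subset_boundary [//|/bWQ]].
have [K [oK clWQK clKW smallK]] :=
  tsbp_shrink (closedI (@closed_closure _ W) (open_closedC oQ)) oW clWQW.
have KclK : K `<=` (closure K)°.
  by rewrite -open_subsetE //; exact: subset_closure.
exists (closure K), V; split.
- by split; [exact: closed_closure | exact: oV].
- by move=> x /clWQK /KclK.
- split; first by move=> x /clKW /subset_closure /clWV.
  by move=> x /clVWQ [].
- move=> x [Vx nKx]; have [_ [Wx|//]] := clVWQ x (subset_closure Vx).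
  apply: contrapT => nQx; apply/nKx/subset_closure/clWQK.
  by split => //; exact: subset_closure.
- split => //; apply: top_small_subset smallK; first exact: closed_boundary.
  exact: boundary_closure_subset.
Qed.

End SmallBoundaryProperty.

Theorem proposition4p9 (R : realType) (X : pseudoPMetricType R) (h : X -> X)
  (eps : R) :
  hausdorff_space X -> compact [set: X] -> infinite_set [set: X] ->
  homeomorphism h -> minimal_map h -> top_small_boundary_property h ->
  0 < eps ->
  forall F U : set X, closed F -> open U -> F `<=` U ->
  exists K V : set X,
    [/\ closed K, open V,
        F `<=` K° /\ K° `<=` K /\ K `<=` V /\ V `<=` closure V /\ closure V `<=` U,
        top_small h (boundary K) /\ top_small h (boundary V) &
        forall mu : probability (borel_type X) R, invariant_measure h mu ->
          (mu (V `\` K) < eps%:E)%E].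
Proof.
move=> _ cX _ [hc _] _ tsbp eps0 F U cF oU FU.
have [W [oW FW clWU smallW]] := tsbp_shrink cX tsbp cF oU FU.
have bWF : boundary W `<=` ~` F.
  by move=> x [_ nWx] Fx; apply: nWx; rewrite (interior_id W).1 //; exact: FW.
have [Q [oQ bWQ QF smallQ]] :=
  top_small_nbhd_measure_lt cX tsbp hc eps0 smallW (closed_openC cF) bWF.
have [K [V [[cK oV] clWQK [KV clVU] VKQ smallKV]]] :=
  tsbp_squeeze cX tsbp oW oQ oU clWU bWQ.
exists K, V; split => //.
- split; last first.
    by do !split => //; [exact: interior_subset | exact: subset_closure].
  move=> x Fx; apply: clWQK.
  by split; [exact/subset_closure/FW | move=> /QF].
- move=> mu hinv; apply: le_lt_trans (smallQ mu hinv).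
  apply: le_measure; rewrite ?in_setE //; apply: borel_measurable_open => //.
  by rewrite setDE; apply: openI => //; exact: closed_openC.
Qed.
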